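(* Let $(\mathbf f,\mathbf g)$ be a vector admissible system, $\epsilon\in\mathcal E$, $L,w\in\mathbb N$, and let $\mathbf X$ be the fixed point of the one-sided spatially-coupled system obtained as the limit of its recursion from the all-ones initialization (so that, in particular, its rows are non-decreasing in the position index). Then $\mathbf x^\infty(\mathbf x_{i_0};\epsilon)$ exists, $\mathbf x_{i_0}\preceq\mathbf x^\infty(\mathbf x_{i_0};\epsilon)$, and $U(\mathbf x_{i_0};\epsilon)\ge U(\mathbf x^\infty(\mathbf x_{i_0};\epsilon);\epsilon)$, where $U$ is the single-system potential.
   Context: Let $d\in\mathbb N$, $\mathcal X=[0,1]^d$, $\mathcal E=[0,1]$, $\mathcal X^\circ=\mathcal X\setminus\{\mathbf 0\}$; vectors are row vectors and $\mathbf x\preceq\mathbf y$ means $x_i\le y_i$ for all $i$. Let $\mathbf D$ be a $d\times d$ positive diagonal matrix, $\mathbf f:\mathcal X\times\mathcal E\to\mathcal X$, $\mathbf g:\mathcal X\to\mathcal X$, and $F,G$ scalar functionals with $\nabla_{\mathbf x}F(\mathbf x;\epsilon)=\mathbf f(\mathbf x;\epsilon)\mathbf D$, $\nabla G(\mathbf x)=\mathbf g(\mathbf x)\mathbf D$, $F(\mathbf 0;\epsilon)=G(\mathbf 0)=0$. $(\mathbf f,\mathbf g)$ is a vector admissible system if: (i) $\mathbf f,\mathbf g$ are $C^2$; (ii) $\mathbf f(\mathbf x;\epsilon)$, $\mathbf g(\mathbf x)$ are non-decreasing in $\mathbf x$ w.r.t. $\preceq$; (iii) for $\mathbf x\in\mathcal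 X^\circ$, $\epsilon_1<\epsilon_2$ implies $\mathbf f(\mathbf x;\epsilon_1)\preceq\mathbf f(\mathbf x;\epsilon_2)$ and $\mathbf f(\mathbf x;\epsilon_1)\ne\mathbf f(\mathbf x;\epsilon_2)$; (iv) $\mathbf f(\mathbf 0;\epsilon)=\mathbf f(\mathbf x;0)=\mathbf g(\mathbf 0)=\mathbf 0$, $F(\mathbf x;0)=0$. Single-system potential: $U(\mathbf x;\epsilon)=\mathbf g(\mathbf x)\mathbf D\mathbf x^{\mathsf T}-G(\mathbf x)-F(\mathbf g(\mathbf x);\epsilon)$. $\mathbf x^\infty(\mathbf x;\epsilon)=\lim_{\ell\to\infty}\mathbf x^{(\ell)}$ for the recursion $\mathbf x^{(\ell+1)}=\mathbf f(\mathbf g(\mathbf x^{(\ell)});\epsilon)$, $\mathbf x^{(0)}=\mathbf x$, when the limit exists. One-sided spatially-coupled system: let $\epsilon_i=\epsilon$ for $i\in\{-L,\dots,L\}$, $\epsilon_i=0$ otherwise, $i_0=\lfloor (w-1)/2\rfloor$. Iterates $\mathbf x_i^{(\ell)}$, $i\in\{-L,\dots,L+w-1\}$, start from $\mathbf x_i^{(0)}=\mathbf 1$, with $\mathbf x_i^{(\ell)}=\mathbf 0$ for $i<-L$; for $-L\le i\le i_0$, $\mathbf x_i^{(\ell+1)}=\frac1w\sum_{k=0}^{w-1}\mathbf f\big(\frac1w\sum_{j=0}^{w-1}\mathbf g(\mathbf x^{(\ell)}_{i+j-k});\epsilon_{i-k}\big)$, and for $i_0<i\le L+w-1$, $\mathbf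 x_i^{(\ell)}=\mathbf x_{i_0}^{(\ell)}$. Its fixed point $\mathbf X$ has rows $\mathbf x_{-L},\dots,\mathbf x_{L+w-1}$. *)

From Stdlib Require Import Reals Lra Lia ZArith List Bool.
Open Scope R_scope.

(* Vectors in R^d are represented as functions nat -> R; a vector of the
   cube [0,1]^n has coordinates in [0,1] for indices < n and is padded
   with zeros for indices >= n. *)
Definition vec := nat -> R.

Definition in_cube (n : nat) (x : vec) : Prop :=
  (forall i, (i < n)%nat -> 0 <= x i <= 1) /\ (forall i, (n <= i)%nat -> x i = 0).

Definition in_E (e : R) : Prop := 0 <= e <= 1.

Definition vzero : vec := fun _ => 0.
Definition vone (d : nat) : vec := fun i => if (i <? d)%nat then 1 else 0.

Definition vle (d : nat) (x y : vec) : Prop := forall i, (i < d)%nat -> x i <= y i.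

Definition vupd (x : vec) (j : nat) (t : R) : vec :=
  fun i => if Nat.eqb i j then t else x i.

Definition vtrunc (n : nat) (z : vec) : vec := fun i => if (i <? n)%nat then z i else 0.

Definition pderiv_in (h : vec -> R) (j : nat) (x : vec) (l : R) : Prop :=
  forall eps, 0 < eps -> exists delta, 0 < delta /\
    forall t, 0 <= t <= 1 -> t <> x j -> Rabs (t - x j) < delta ->
      Rabs ((h (vupd x j t) - h x) / (t - x j) - l) < eps.

Definition cont_in (n : nat) (h : vec -> R) (x : vec) : Prop :=
  forall eps, 0 < eps -> exists delta, 0 < delta /\
    forall y, in_cube n y -> (forall i, (i < n)%nat -> Rabs (y i - x i) < delta) ->
      Rabs (h y - h x) < eps.

Definition C2_on (n : nat) (h : vec -> R) : Prop :=
  exists (dh : nat -> vec -> R) (ddh : nat -> nat -> vec -> R),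
    forall x, in_cube n x ->
      cont_in n h x /\
      forall j, (j < n)%nat ->
        pderiv_in h j x (dh j x) /\ cont_in n (dh j) x /\
        forall k, (k < n)%nat ->
          pderiv_in (dh j) k x (ddh j k x) /\ cont_in n (ddh j k) x.

Definition rsum (n : nat) (h : nat -> R) : R := fold_right Rplus 0 (map h (seq 0 n)).

(* Vector admissible system (f,g) with diagonal D (given by its diagonal Dd)
   and potentials F, G. *)
Definition vector_admissible (d : nat) (Dd : nat -> R)
    (f : vec -> R -> vec) (g : vec -> vec)
    (F : vec -> R -> R) (G : vec -> R) : Prop :=
  (forall i, (i < d)%nat -> 0 < Dd i) /\
  (forall x e, in_cube d x -> in_E e -> in_cube d (f x e)) /\
  (forall x, in_cube d x -> in_cube d (g x)) /\
  (forall x e j, in_cube d x -> in_E e -> (j < d)%nat ->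
     pderiv_in (fun y => F y e) j x (f x e j * Dd j)) /\
  (forall x j, in_cube d x -> (j < d)%nat ->
     pderiv_in G j x (g x j * Dd j)) /\
  (forall e, in_E e -> F vzero e = 0) /\ G vzero = 0 /\
  (* (i) f, g are C^2 (f jointly in (x, e) in [0,1]^(d+1)) *)
  (forall c, (c < d)%nat -> C2_on (S d) (fun z => f (vtrunc d z) (z d) c)) /\
  (forall c, (c < d)%nat -> C2_on d (fun x => g x c)) /\
  (forall e x y, in_E e -> in_cube d x -> in_cube d y -> vle d x y -> vle d (f x e) (f y e)) /\
  (forall x y, in_cube d x -> in_cube d y -> vle d x y -> vle d (g x) (g y)) /\
  (forall x e1 e2, in_cube d x -> x <> vzero -> in_E e1 -> in_E e2 -> e1 < e2 ->
     vle d (f x e1) (f x e2) /\ f x e1 <> f x e2) /\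
  (forall e, in_E e -> f vzero e = vzero) /\
  (forall x, in_cube d x -> f x 0 = vzero) /\
  g vzero = vzero /\
  (forall x, in_cube d x -> F x 0 = 0).

Definition U_pot (d : nat) (Dd : nat -> R) (f : vec -> R -> vec) (g : vec -> vec)
    (F : vec -> R -> R) (G : vec -> R) (x : vec) (e : R) : R :=
  rsum d (fun i => g x i * Dd i * x i) - G x - F (g x) e.

Fixpoint ss_iter (f : vec -> R -> vec) (g : vec -> vec) (e : R) (x : vec) (l : nat) : vec :=
  match l with
  | O => x
  | S l' => f (g (ss_iter f g e x l')) e
  end.

Definition sc_eps (L : nat) (e : R) (i : Z) : R :=
  if (andb (- Z.of_nat L <=? i)%Z (i <=? Z.of_nat L)%Z) then e else 0.

Definition sc_i0 (w : nat) : Z := ((Z.of_nat w - 1) / 2)%Z.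

Definition sc_step (f : vec -> R -> vec) (g : vec -> vec) (e : R) (L w : nat)
    (prev : Z -> vec) : Z -> vec :=
  fun i =>
    if (i <? - Z.of_nat L)%Z then vzero
    else
      let i' := if (sc_i0 w <? i)%Z then sc_i0 w else i in
      fun c => / INR w * rsum w (fun k =>
        f (fun c' => / INR w * rsum w (fun j =>
              g (prev (i' + Z.of_nat j - Z.of_nat k)%Z) c'))
          (sc_eps L e (i' - Z.of_nat k)%Z) c).

Fixpoint sc_iter (d : nat) (f : vec -> R -> vec) (g : vec -> vec) (e : R) (L w : nat)
    (l : nat) : Z -> vec :=
  match l with
  | O => fun i => if (i <? - Z.of_nat L)%Z then vzero else vone d
  | S l' => sc_step f g e L w (sc_iter d f g e L w l')
  end.

From Stdlib Require Import Reals ZArith.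
From Stdlib Require Import Lra Lia List FunctionalExtensionality.
Open Scope R_scope.

(* Lemma 10.  Write x0 for the centre row X_{i0} of the coupled fixed point.

   (A) Single system.  If x0 <= f(g(x0); e), monotonicity of f and g makes the
   iterates x^(l) nondecreasing; bounded by 1, they converge to some x^oo >= x0.
   Since grad F = f D and grad G = g D with f, g monotone, a potential h with
   monotone gradient p D satisfies h(y) - h(x) >= <p(x) D, y - x> for x <= y
   (integrate along the coordinate staircase from x to y, using a one-sided
   mean value inequality).  Hence U(x) - U(y) >= <(g(y) - g(x)) D, f(g(x)) - y>,
   so U decreases along the iterates and U(x^(l)) - U(x^oo) >= -<D, x^oo - x^(l+1)>,
   which tends to 0: U(x0) >= U(x^oo).

   (B) Coupled system.  By induction every coupled state lies in the cube and is
   nondecreasing in the position; as positions beyond i0 copy i0, every window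
   average of g is below g at i0, so x^(l+1)_{i0} <= f(g(x^(l)_{i0}); e).  Passing
   to the limit with the continuity of f and g gives x0 <= f(g(x0); e), which is
   the hypothesis of (A). *)

Lemma rsum_0 h : rsum 0 h = 0.
Proof. reflexivity. Qed.

Lemma rsum_S n h : rsum (S n) h = rsum n h + h n.
Proof.
  unfold rsum. rewrite seq_S, map_app, fold_right_app. simpl.
  induction (map h (seq 0 n)) as [|x l IH]; simpl; lra.
Qed.

Lemma rsum_le n a b : (forall i, (i < n)%nat -> a i <= b i) -> rsum n a <= rsum n b.
Proof.
  induction n as [|n IH]; intros H; rewrite ?rsum_S; [rewrite !rsum_0; lra|].
  assert (a n <= b n) by (apply H; lia).
  assert (rsum n a <= rsum n b) by (apply IH; intros; apply H; lia). lra.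
Qed.

Lemma rsum_ext n a b : (forall i, (i < n)%nat -> a i = b i) -> rsum n a = rsum n b.
Proof. intros H; apply Rle_antisym; apply rsum_le; intros i Hi; rewrite H; auto; lra. Qed.

Lemma rsum_plus n a b : rsum n (fun i => a i + b i) = rsum n a + rsum n b.
Proof. induction n as [|n IH]; rewrite ?rsum_S; [rewrite !rsum_0|]; lra. Qed.

Lemma rsum_minus n a b : rsum n (fun i => a i - b i) = rsum n a - rsum n b.
Proof. induction n as [|n IH]; rewrite ?rsum_S; [rewrite !rsum_0|]; lra. Qed.

Lemma rsum_opp n h : rsum n (fun i => - h i) = - rsum n h.
Proof. induction n as [|n IH]; rewrite ?rsum_S; [rewrite !rsum_0|]; lra. Qed.

Lemma rsum_const n c : rsum n (fun _ => c) = INR n * c.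
Proof. induction n as [|n IH]; [rewrite rsum_0; simpl; ring|]. rewrite rsum_S, IH, S_INR. ring. Qed.

Lemma avg_bound w h lo hi : (1 <= w)%nat -> (forall i, (i < w)%nat -> lo <= h i <= hi) ->
  lo <= / INR w * rsum w h <= hi.
Proof.
  intros Hw H.
  assert (Hlo : rsum w (fun _ => lo) <= rsum w h) by (apply rsum_le; apply H).
  assert (Hhi : rsum w h <= rsum w (fun _ => hi)) by (apply rsum_le; apply H).
  rewrite rsum_const in Hlo, Hhi.
  assert (Hpos : 0 < INR w) by (apply lt_0_INR; lia).
  assert (Hinv : 0 < / INR w) by (apply Rinv_0_lt_compat; lra).
  assert (/ INR w * (INR w * lo) = lo) by (field; lra).
  assert (/ INR w * (INR w * hi) = hi) by (field; lra).
  split; nra.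
Qed.

Lemma rsum_window_shift (h : Z -> R) (t : Z) n :
  rsum n (fun k => h (t + 1 - Z.of_nat k)%Z) - rsum n (fun k => h (t - Z.of_nat k)%Z) =
  h (t + 1)%Z - h (t + 1 - Z.of_nat n)%Z.
Proof.
  induction n as [|n IH].
  - rewrite !rsum_0. replace (t + 1 - Z.of_nat 0)%Z with (t + 1)%Z by lia. lra.
  - rewrite !rsum_S. replace (t + 1 - Z.of_nat (S n))%Z with (t - Z.of_nat n)%Z by lia. lra.
Qed.

Lemma cv_const a : Un_cv (fun _ => a) a.
Proof. intros eps He. exists 0%nat. intros. unfold Rdist. rewrite Rminus_diag, Rabs_R0. lra. Qed.

Lemma cv_succ u a : Un_cv u a -> Un_cv (fun l => u (S l)) a.
Proof.
  intros H. apply (Un_cv_ext (fun l => u (l + 1)%nat)); [intro l; f_equal; lia|].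
  now apply CV_shift'.
Qed.

Lemma cv_bound u a lo hi : Un_cv u a -> (forall n, lo <= u n <= hi) -> lo <= a <= hi.
Proof.
  intros H Hb. split.
  - apply (Rle_cv_lim (Un := fun _ => lo) (Vn := u)); auto using cv_const. apply Hb.
  - apply (Rle_cv_lim (Un := u) (Vn := fun _ => hi)); auto using cv_const. apply Hb.
Qed.

Lemma Un_cv_rsum n (u : nat -> nat -> R) a :
  (forall i, (i < n)%nat -> Un_cv (fun l => u l i) (a i)) ->
  Un_cv (fun l => rsum n (u l)) (rsum n a).
Proof.
  induction n as [|n IH]; intros H; [apply (Un_cv_ext (fun _ => 0)); [reflexivity | apply cv_const]|].
  rewrite rsum_S. apply (Un_cv_ext (fun l => rsum n (u l) + u l n)).
  - intro l. now rewrite rsum_S.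
  - apply CV_plus; [apply IH; intros; apply H; lia | apply H; lia].
Qed.

Lemma in_cube_limit n (s : nat -> vec) x :
  (forall l, in_cube n (s l)) -> (forall c, Un_cv (fun l => s l c) (x c)) -> in_cube n x.
Proof.
  intros Hs Hcv. split.
  - intros c Hc. apply (cv_bound _ _ 0 1 (Hcv c)). intro l. apply Hs; auto.
  - intros c Hc. apply (UL_sequence _ _ _ (Hcv c)).
    apply (Un_cv_ext (fun _ => 0)); [intro l; symmetry; apply Hs; auto | apply cv_const].
Qed.

(* Sequential continuity for [cont_in]: finitely many coordinates converge
   uniformly, so a cube-continuous function commutes with the limit. *)
Lemma cv_coords_uniform n (s : nat -> vec) x delta : 0 < delta ->
  (forall c, (c < n)%nat -> Un_cv (fun l => s l c) (x c)) ->
  exists N, forall l, (l >= N)%nat -> forall c, (c < n)%nat -> Rabs (s l c - x c) < delta.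
Proof.
  intros Hd Hcv. induction n as [|n IH]; [exists 0%nat; intros; lia|].
  destruct IH as [N1 HN1]; [intros; apply Hcv; lia|].
  destruct (Hcv n ltac:(lia) delta Hd) as [N2 HN2].
  exists (Nat.max N1 N2). intros l Hl c Hc.
  destruct (Nat.eq_dec c n) as [->|]; [apply HN2 | apply HN1]; lia.
Qed.

Lemma cont_in_seq n h (s : nat -> vec) x :
  (forall l, in_cube n (s l)) -> (forall c, (c < n)%nat -> Un_cv (fun l => s l c) (x c)) ->
  cont_in n h x -> Un_cv (fun l => h (s l)) (h x).
Proof.
  intros Hs Hcv Hc eps He. destruct (Hc eps He) as [delta [Hd Hdl]].
  destruct (cv_coords_uniform n s x delta Hd Hcv) as [N HN].
  exists N. intros l Hl. apply Hdl; auto.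
Qed.

Lemma local_nondecreasing_le (chi : R -> R) a b : a <= b ->
  (forall t, a <= t <= b -> exists delta, 0 < delta /\
     forall s, a <= s <= b -> Rabs (s - t) < delta ->
       (t <= s -> chi t <= chi s) /\ (s <= t -> chi s <= chi t)) ->
  chi a <= chi b.
Proof.
  intros Hab loc.
  set (Reach := fun t => a <= t <= b /\ forall s, a <= s <= t -> chi a <= chi s).
  assert (HSa : Reach a) by (split; [lra| intros s Hs; replace s with a by lra; lra]).
  destruct (completeness Reach ltac:(exists b; intros t [Ht _]; lra) ltac:(exists a; exact HSa))
    as [c [Hub Hlub]].
  assert (Hac : a <= c) by (apply Hub; exact HSa).
  assert (Hcb : c <= b) by (apply Hlub; intros t [Ht _]; lra).
  (* Reach collects the points up to which chi a is a lower bound; below its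
     supremum c every value dominates chi a *)
  assert (Hbelow : forall s, a <= s < c -> chi a <= chi s).
  { intros s Hs. destruct (Rle_dec (chi a) (chi s)) as [|Hn]; auto.
    exfalso. assert (c <= s); [|lra]. apply Hlub. intros t [Ht Ht2].
    destruct (Rle_dec t s); auto. exfalso; apply Hn; apply Ht2; lra. }
  destruct (loc c ltac:(lra)) as [delta [Hd Hl]].
  assert (Hc : chi a <= chi c).
  { destruct (Req_dec c a) as [->|Hne]; [lra|].
    set (s := Rmax a (c - delta / 2)).
    assert (a <= s) by apply Rmax_l.
    assert (c - delta / 2 <= s) by apply Rmax_r.
    assert (s < c) by (apply Rmax_lub_lt; lra).
    assert (chi s <= chi c) by (apply (Hl s); try lra; rewrite Rabs_left; lra).
    assert (chi a <= chi s) by (apply Hbelow; lra). lra. }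
  (* and the supremum is b, otherwise it could be pushed to the right *)
  assert (Hcb_eq : c = b).
  { destruct (Req_dec c b) as [|Hne]; auto. exfalso.
    set (s := Rmin b (c + delta / 2)).
    assert (Hs : c < s <= b) by (unfold s; split; [apply Rmin_glb_lt; lra | apply Rmin_l]).
    assert (s <= c + delta / 2) by apply Rmin_r.
    assert (Reach s); [|assert (s <= c) by (apply Hub; auto); lra].
    split; [lra|]. intros r Hr. destruct (Rle_dec r c).
    - destruct (Req_dec r c) as [->|]; auto. apply Hbelow; lra.
    - assert (chi c <= chi r); [|lra]. apply (Hl r); try lra. rewrite Rabs_right; lra. }
  now subst c.
Qed.

Lemma mean_value_lower_bound (phi Dphi : R -> R) a b m :
  0 <= a -> a <= b -> b <= 1 ->
  (forall t, a <= t <= b -> m <= Dphi t) ->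
  (forall t, a <= t <= b -> forall eps, 0 < eps -> exists delta, 0 < delta /\
     forall s, 0 <= s <= 1 -> s <> t -> Rabs (s - t) < delta ->
       Rabs ((phi s - phi t) / (s - t) - Dphi t) < eps) ->
  m * (b - a) <= phi b - phi a.
Proof.
  intros Ha Hab Hb HD Hder.
  (* for every eps > 0, t |-> phi t - (m - eps) t is nondecreasing on [a, b] *)
  assert (Heps : forall eps, 0 < eps -> (m - eps) * (b - a) <= phi b - phi a).
  { intros eps He.
    assert (K := local_nondecreasing_le (fun t => phi t - (m - eps) * t) a b Hab).
    cut (phi a - (m - eps) * a <= phi b - (m - eps) * b); [lra|]. apply K.
    intros t Ht. destruct (Hder t Ht eps He) as [delta [Hd Hs]].
    exists delta; split; auto. intros s Hs1 Hsd.
    destruct (Req_dec s t) as [->|Hst]; [lra|].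
    assert (Hq := Hs s ltac:(lra) Hst Hsd).
    set (q := (phi s - phi t) / (s - t)) in Hq.
    assert (Heq : phi s - phi t = q * (s - t)) by (unfold q; field; lra).
    assert (HDt := HD t Ht). apply Rabs_def2 in Hq.
    split; intros; nra. }
  apply Rle_plus_epsilon. intros eps He.
  assert (He' : 0 < eps / (b - a + 1)) by (apply Rdiv_lt_0_compat; lra).
  assert (Hs := Heps _ He').
  assert (eps / (b - a + 1) * (b - a) <= eps); [|nra].
  apply (Rmult_le_reg_r (b - a + 1)); [lra|].
  replace (eps / (b - a + 1) * (b - a) * (b - a + 1)) with (eps * (b - a)) by (field; lra).
  nra.
Qed.

Lemma vle_refl d x : vle d x x.
Proof. intros i Hi; lra. Qed.

Lemma vle_trans d x y z : vle d x y -> vle d y z -> vle d x z.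
Proof. intros H1 H2 i Hi. specialize (H1 i Hi). specialize (H2 i Hi). lra. Qed.

Lemma vzero_le d x : in_cube d x -> vle d vzero x.
Proof. intros Hx i Hi. apply Hx; auto. Qed.

Lemma vle_chain d (p : Z -> vec) : (forall m, vle d (p m) (p (m + 1)%Z)) ->
  forall m m', (m <= m')%Z -> vle d (p m) (p m').
Proof.
  intros H m m' Hmm.
  assert (Hn : forall n : nat, vle d (p m) (p (m + Z.of_nat n)%Z)).
  { induction n as [|n IH].
    - replace (m + Z.of_nat 0)%Z with m by lia. apply vle_refl.
    - eapply vle_trans; [exact IH|].
      replace (m + Z.of_nat (S n))%Z with (m + Z.of_nat n + 1)%Z by lia. apply H. }
  replace m' with (m + Z.of_nat (Z.to_nat (m' - m)))%Z by lia. apply Hn.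
Qed.

Lemma vupd_same z j t : vupd z j t j = t.
Proof. unfold vupd. now rewrite Nat.eqb_refl. Qed.

Lemma vupd_vupd z j t s : vupd (vupd z j t) j s = vupd z j s.
Proof. apply functional_extensionality; intro i. unfold vupd. now destruct (Nat.eqb i j). Qed.

(* The staircase path from x to y: the first k coordinates are taken from y,
   the others from x.  Consecutive points differ in coordinate k only. *)
Definition vsplice (k : nat) (x y : vec) : vec :=
  fun i => if (i <? k)%nat then y i else x i.

Lemma vsplice_upd_left k x y : vupd (vsplice k x y) k (x k) = vsplice k x y.
Proof.
  apply functional_extensionality; intro i. unfold vupd, vsplice.
  destruct (Nat.eqb_spec i k); [subst; now rewrite Nat.ltb_irrefl | auto].
Qed.

Lemma vsplice_upd_right k x y : vupd (vsplice k x y) k (y k) = vsplice (S k) x y.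
Proof.
  apply functional_extensionality; intro i. unfold vupd, vsplice.
  destruct (Nat.eqb_spec i k); [subst; now rewrite (proj2 (Nat.ltb_lt k (S k))) by lia|].
  destruct (Nat.ltb_spec i k); destruct (Nat.ltb_spec i (S k)); auto; lia.
Qed.

Lemma vsplice_full d x y : in_cube d x -> in_cube d y -> vsplice d x y = y.
Proof.
  intros Hx Hy. apply functional_extensionality; intro i. unfold vsplice.
  destruct (Nat.ltb_spec i d); auto. rewrite (proj2 Hx i), (proj2 Hy i); auto.
Qed.

Lemma vsplice_upd_cube d k x y t : in_cube d x -> in_cube d y -> (k < d)%nat -> 0 <= t <= 1 ->
  in_cube d (vupd (vsplice k x y) k t).
Proof.
  intros Hx Hy Hk Ht. split; intros i Hi; unfold vupd, vsplice.
  - destruct (Nat.eqb i k); auto. destruct (i <? k)%nat; [apply Hy | apply Hx]; auto.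
  - destruct (Nat.eqb_spec i k); [lia|]. destruct (Nat.ltb_spec i k); [lia|]. apply Hx; auto.
Qed.

Lemma vsplice_upd_above d k x y t : vle d x y -> x k <= t -> vle d x (vupd (vsplice k x y) k t).
Proof.
  intros Hxy Ht i Hi. unfold vupd, vsplice.
  destruct (Nat.eqb_spec i k); [now subst|]. destruct (i <? k)%nat; [apply Hxy; auto | lra].
Qed.

(* It is obtained by integrating along the staircase path from x to y. *)
Section MonotoneGradient.
Variables (d : nat) (Dd : nat -> R) (h : vec -> R) (p : vec -> vec).
Hypotheses (HDd : forall i, (i < d)%nat -> 0 < Dd i)
  (Hgrad : forall z j, in_cube d z -> (j < d)%nat -> pderiv_in h j z (p z j * Dd j))
  (Hmono : forall x y, in_cube d x -> in_cube d y -> vle d x y -> vle d (p x) (p y)).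

Lemma monotone_gradient_step x y k : in_cube d x -> in_cube d y -> vle d x y -> (k < d)%nat ->
  p x k * Dd k * (y k - x k) <= h (vsplice (S k) x y) - h (vsplice k x y).
Proof.
  intros Hx Hy Hxy Hk.
  rewrite <- vsplice_upd_right.
  replace (h (vsplice k x y)) with (h (vupd (vsplice k x y) k (x k)))
    by now rewrite vsplice_upd_left.
  assert (Hxk := proj1 Hx k Hk). assert (Hyk := proj1 Hy k Hk). assert (Hxyk := Hxy k Hk).
  apply (mean_value_lower_bound (fun t => h (vupd (vsplice k x y) k t))
           (fun t => p (vupd (vsplice k x y) k t) k * Dd k)); try lra.
  - intros t Ht. apply Rmult_le_compat_r; [left; apply HDd; auto|].
    apply Hmono; auto. apply vsplice_upd_cube; auto; lra. apply vsplice_upd_above; auto; lra.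
  - intros t Ht eps He.
    destruct (Hgrad (vupd (vsplice k x y) k t) k ltac:(apply vsplice_upd_cube; auto; lra) Hk eps He)
      as [delta [Hdl Hs]].
    exists delta; split; auto. intros s Hs1 Hst Hsd.
    assert (Hq := Hs s Hs1). rewrite vupd_same, vupd_vupd in Hq. apply Hq; auto.
Qed.

Lemma monotone_gradient_inequality x y : in_cube d x -> in_cube d y -> vle d x y ->
  rsum d (fun i => p x i * Dd i * (y i - x i)) <= h y - h x.
Proof.
  intros Hx Hy Hxy.
  assert (Hpath : forall k, (k <= d)%nat ->
     rsum k (fun i => p x i * Dd i * (y i - x i)) <= h (vsplice k x y) - h x).
  { induction k as [|k IH]; intros Hk.
    - rewrite rsum_0. replace (vsplice 0 x y) with x by reflexivity. lra.
    - rewrite rsum_S. assert (H1 := IH ltac:(lia)).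
      assert (H2 := monotone_gradient_step x y k Hx Hy Hxy ltac:(lia)). lra. }
  replace (h y) with (h (vsplice d x y)) by now rewrite vsplice_full.
  apply Hpath. lia.
Qed.
End MonotoneGradient.

Lemma sc_i0_bounds w : (1 <= w)%nat -> (0 <= sc_i0 w)%Z /\ (2 * sc_i0 w <= Z.of_nat w - 1)%Z.
Proof. intros Hw. unfold sc_i0. split; [apply Z.div_pos | apply Z.mul_div_le]; lia. Qed.

Lemma sc_eps_cases L e t : sc_eps L e t = e \/ sc_eps L e t = 0.
Proof. unfold sc_eps. destruct (andb _ _); auto. Qed.

Lemma sc_eps_in_E L e t : in_E e -> in_E (sc_eps L e t).
Proof. intros He. destruct (sc_eps_cases L e t) as [-> | ->]; auto. unfold in_E; lra. Qed.

Lemma sc_eps_inside L e t : (- Z.of_nat L <= t <= Z.of_nat L)%Z -> sc_eps L e t = e.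
Proof. intros Ht. unfold sc_eps. now rewrite (proj2 (Z.leb_le _ _)), (proj2 (Z.leb_le _ _)) by lia. Qed.

Lemma sc_eps_below L e t : (t < - Z.of_nat L)%Z -> sc_eps L e t = 0.
Proof. intros Ht. unfold sc_eps. now rewrite (proj2 (Z.leb_gt _ _)) by lia. Qed.

(* Embedding of the cube [0,1]^d into [0,1]^(d+1) that appends the parameter e
   as coordinate d; the C^2 hypothesis on f is stated on the larger cube. *)
Definition vext (d : nat) (e : R) (y : vec) : vec :=
  fun i => if (i <? d)%nat then y i else if Nat.eqb i d then e else 0.

Lemma vext_cube d e y : in_E e -> in_cube d y -> in_cube (S d) (vext d e y).
Proof.
  intros He Hy. split; intros i Hi; unfold vext.
  - destruct (Nat.ltb_spec i d); [apply Hy; auto|].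
    destruct (Nat.eqb_spec i d); [exact He | lia].
  - destruct (Nat.ltb_spec i d); [lia|]. destruct (Nat.eqb_spec i d); [lia | auto].
Qed.

Lemma vext_trunc d e y : in_cube d y -> vtrunc d (vext d e y) = y.
Proof.
  intros Hy. apply functional_extensionality; intro i. unfold vtrunc, vext.
  destruct (Nat.ltb_spec i d); auto. symmetry; apply Hy; auto.
Qed.

Lemma vext_last d e y : vext d e y d = e.
Proof. unfold vext. now rewrite Nat.ltb_irrefl, Nat.eqb_refl. Qed.

Section Admissible.
Variables (d : nat) (Dd : nat -> R) (f : vec -> R -> vec) (g : vec -> vec)
  (F : vec -> R -> R) (G : vec -> R).
Hypothesis Hadm : vector_admissible d Dd f g F G.

Lemma adm_D_pos i : (i < d)%nat -> 0 < Dd i.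
Proof. destruct Hadm as (H & _). apply H. Qed.

Lemma adm_f_cube x e : in_cube d x -> in_E e -> in_cube d (f x e).
Proof. destruct Hadm as (_ & H & _). apply H. Qed.

Lemma adm_g_cube x : in_cube d x -> in_cube d (g x).
Proof. destruct Hadm as (_ & _ & H & _). apply H. Qed.

Lemma adm_F_grad x e j : in_cube d x -> in_E e -> (j < d)%nat ->
  pderiv_in (fun y => F y e) j x (f x e j * Dd j).
Proof. destruct Hadm as (_ & _ & _ & H & _). apply H. Qed.

Lemma adm_G_grad x j : in_cube d x -> (j < d)%nat -> pderiv_in G j x (g x j * Dd j).
Proof. destruct Hadm as (_ & _ & _ & _ & H & _). apply H. Qed.

Lemma adm_f_C2 c : (c < d)%nat -> C2_on (S d) (fun z => f (vtrunc d z) (z d) c).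
Proof. destruct Hadm as (_ & _ & _ & _ & _ & _ & _ & H & _). apply H. Qed.

Lemma adm_g_C2 c : (c < d)%nat -> C2_on d (fun x => g x c).
Proof. destruct Hadm as (_ & _ & _ & _ & _ & _ & _ & _ & H & _). apply H. Qed.

Lemma adm_f_mono e x y : in_E e -> in_cube d x -> in_cube d y -> vle d x y ->
  vle d (f x e) (f y e).
Proof. destruct Hadm as (_ & _ & _ & _ & _ & _ & _ & _ & _ & H & _). apply H. Qed.

Lemma adm_g_mono x y : in_cube d x -> in_cube d y -> vle d x y -> vle d (g x) (g y).
Proof. destruct Hadm as (_ & _ & _ & _ & _ & _ & _ & _ & _ & _ & H & _). apply H. Qed.

Lemma adm_f_param0 x : in_cube d x -> f x 0 = vzero.
Proof.
  destruct Hadm as (_ & _ & _ & _ & _ & _ & _ & _ & _ & _ & _ & _ & _ & H & _). apply H.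
Qed.

Variable e : R.
Hypothesis He : in_E e.

Notation U x := (U_pot d Dd f g F G x e).

(* It combines the monotone-gradient inequality for G (gradient g D) at x
   and for F(.; e) (gradient f D) at g(x). *)
Lemma potential_difference x y : in_cube d x -> in_cube d y -> vle d x y ->
  rsum d (fun i => (g y i - g x i) * Dd i * (f (g x) e i - y i)) <= U x - U y.
Proof.
  intros Hx Hy Hxy.
  assert (KG := monotone_gradient_inequality d Dd G g adm_D_pos adm_G_grad adm_g_mono
                  x y Hx Hy Hxy).
  assert (KF := monotone_gradient_inequality d Dd (fun z => F z e) (fun z => f z e) adm_D_pos
     (fun z j Hz Hj => adm_F_grad z e j Hz He Hj) (fun a b => adm_f_mono e a b He)
     (g x) (g y) (adm_g_cube x Hx) (adm_g_cube y Hy) (adm_g_mono x y Hx Hy Hxy)).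
  simpl in KF. unfold U_pot.
  replace (rsum d (fun i => (g y i - g x i) * Dd i * (f (g x) e i - y i))) with
     (rsum d (fun i => g x i * Dd i * x i) - rsum d (fun i => g y i * Dd i * y i)
      + rsum d (fun i => g x i * Dd i * (y i - x i))
      + rsum d (fun i => f (g x) e i * Dd i * (g y i - g x i))).
  - lra.
  - rewrite <- !rsum_minus, <- !rsum_plus. apply rsum_ext; intros; ring.
Qed.

Lemma ss_iter_cube x l : in_cube d x -> in_cube d (ss_iter f g e x l).
Proof. intros Hx. induction l; simpl; auto using adm_f_cube, adm_g_cube. Qed.

Lemma ss_iter_nondecreasing x l : in_cube d x -> vle d x (f (g x) e) ->
  vle d (ss_iter f g e x l) (ss_iter f g e x (S l)).
Proof.
  intros Hx H0. induction l as [|l IH]; [exact H0|].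
  change (vle d (f (g (ss_iter f g e x l)) e) (f (g (ss_iter f g e x (S l))) e)).
  apply adm_f_mono; auto using adm_g_cube, ss_iter_cube.
  apply adm_g_mono; auto using ss_iter_cube.
Qed.

Lemma ss_iter_limit x : in_cube d x -> vle d x (f (g x) e) ->
  exists xinf, in_cube d xinf /\
    (forall c, Un_cv (fun l => ss_iter f g e x l c) (xinf c)) /\
    (forall l, vle d (ss_iter f g e x l) xinf).
Proof.
  intros Hx H0. set (xs := ss_iter f g e x).
  assert (Hcube : forall l, in_cube d (xs l)) by (intro; apply ss_iter_cube; auto).
  assert (Hgr : forall c, Un_growing (fun l => xs l c)).
  { intros c l. destruct (Nat.lt_ge_cases c d) as [Hc|Hc].
    - apply ss_iter_nondecreasing; auto.
    - rewrite (proj2 (Hcube l)), (proj2 (Hcube (S l))); auto; lra. }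
  assert (Hub : forall c, has_ub (fun l => xs l c)).
  { intros c. exists 1. intros r [l ->]. destruct (Nat.lt_ge_cases c d) as [Hc|Hc].
    - apply (proj1 (Hcube l)); auto.
    - rewrite (proj2 (Hcube l)); auto; lra. }
  set (xinf := fun c => proj1_sig (growing_cv _ (Hgr c) (Hub c))).
  assert (Hcv : forall c, Un_cv (fun l => xs l c) (xinf c)) by (intro c; apply proj2_sig).
  exists xinf. split; [apply (in_cube_limit d xs); auto|]. split; [exact Hcv|].
  intros l c Hc. apply (growing_ineq (fun l => xs l c)); auto.
Qed.

Lemma potential_nonincreasing x l : in_cube d x -> vle d x (f (g x) e) ->
  U (ss_iter f g e x (S l)) <= U (ss_iter f g e x l).
Proof.
  intros Hx H0. set (xs := ss_iter f g e x).
  assert (K := potential_difference (xs l) (xs (S l)) (ss_iter_cube x l Hx)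
                 (ss_iter_cube x (S l) Hx) (ss_iter_nondecreasing x l Hx H0)).
  (* the correction term vanishes because xs (S l) = f (g (xs l)) *)
  replace (rsum d _) with (rsum d (fun _ => 0)) in K.
  - rewrite rsum_const in K. lra.
  - apply rsum_ext. intros i Hi. change (xs (S l)) with (f (g (xs l)) e). ring.
Qed.

Lemma potential_gap x xinf l : in_cube d x -> in_cube d xinf ->
  (forall l, vle d (ss_iter f g e x l) xinf) ->
  - rsum d (fun i => Dd i * (xinf i - ss_iter f g e x (S l) i)) <=
  U (ss_iter f g e x l) - U xinf.
Proof.
  intros Hx Hic Hle. set (xs := ss_iter f g e x) in *.
  assert (Hl := ss_iter_cube x l Hx).
  eapply Rle_trans; [|exact (potential_difference (xs l) xinf Hl Hic (Hle l))].
  rewrite <- rsum_opp. apply rsum_le. intros i Hi.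
  change (f (g (xs l)) e i) with (xs (S l) i).
  assert (HA : 0 <= g xinf i - g (xs l) i <= 1).
  { assert (H1 := adm_g_mono (xs l) xinf Hl Hic (Hle l) i Hi).
    assert (H2 := proj1 (adm_g_cube xinf Hic) i Hi).
    assert (H3 := proj1 (adm_g_cube (xs l) Hl) i Hi). lra. }
  assert (HB : xs (S l) i - xinf i <= 0) by (specialize (Hle (S l) i Hi); lra).
  assert (HDi := adm_D_pos i Hi).
  set (A := g xinf i - g (xs l) i) in *. set (B := xs (S l) i - xinf i) in *.
  replace (xinf i - xs (S l) i) with (- B) by (unfold B; ring).
  assert (Dd i * B <= 0) by nra.
  assert (0 <= (Dd i * B) * (A - 1)) by nra. nra.
Qed.

Lemma single_system_descent x0 : in_cube d x0 -> vle d x0 (f (g x0) e) ->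
  exists xinf : vec,
    (forall c, Un_cv (fun l => ss_iter f g e x0 l c) (xinf c)) /\
    vle d x0 xinf /\ U x0 >= U xinf.
Proof.
  intros Hx0 H01. destruct (ss_iter_limit x0 Hx0 H01) as (xinf & Hic & Hcv & Hle).
  exists xinf. split; [exact Hcv|]. split; [exact (Hle 0%nat)|].
  set (xs := ss_iter f g e x0).
  set (gap := fun l => rsum d (fun i => Dd i * (xinf i - xs (S l) i))).
  assert (Hdown : forall l, U (xs l) <= U x0).
  { induction l as [|l IH]; [apply Rle_refl|].
    assert (H := potential_nonincreasing x0 l Hx0 H01). fold xs in H. lra. }
  assert (Hgap : Un_cv gap 0).
  { apply (Un_cv_ext (fun l => rsum d (fun i => Dd i * (xinf i - xs (S l) i)))); [reflexivity|].
    replace 0 with (rsum d (fun i => Dd i * (xinf i - xinf i)))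
      by (rewrite <- (Rmult_0_r (INR d)), <- rsum_const; apply rsum_ext; intros; ring).
    apply (Un_cv_rsum d (fun l i => Dd i * (xinf i - xs (S l) i))). intros i Hi.
    apply CV_mult; [apply cv_const|]. apply CV_minus; [apply cv_const|].
    apply (cv_succ (fun l => xs l i)), Hcv. }
  apply Rle_ge, (Rle_cv_lim (Un := fun _ => U xinf) (Vn := fun l => U x0 + gap l));
    [| apply cv_const |].
  - intro l. assert (H := potential_gap x0 xinf l Hx0 Hic Hle). fold xs in H.
    specialize (Hdown l). unfold gap. lra.
  - assert (H := CV_plus _ _ _ _ (cv_const (U x0)) Hgap). now rewrite Rplus_0_r in H.
Qed.

Lemma g_seq_cont (s : nat -> vec) x c : (c < d)%nat -> in_cube d x ->
  (forall l, in_cube d (s l)) -> (forall c, (c < d)%nat -> Un_cv (fun l => s l c) (x c)) ->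
  Un_cv (fun l => g (s l) c) (g x c).
Proof.
  intros Hc Hx Hs Hcv. destruct (adm_g_C2 c Hc) as (dh & ddh & Hh).
  apply (cont_in_seq d (fun y => g y c)); auto. apply (Hh x Hx).
Qed.

Lemma f_seq_cont (s : nat -> vec) x c : (c < d)%nat -> in_cube d x ->
  (forall l, in_cube d (s l)) -> (forall c, (c < d)%nat -> Un_cv (fun l => s l c) (x c)) ->
  Un_cv (fun l => f (s l) e c) (f x e c).
Proof.
  intros Hc Hx Hs Hcv. destruct (adm_f_C2 c Hc) as (dh & ddh & Hh).
  assert (Hval : forall y, in_cube d y -> f (vtrunc d (vext d e y)) (vext d e y d) c = f y e c)
    by (intros y Hy; now rewrite vext_trunc, vext_last).
  rewrite <- Hval by auto. apply (Un_cv_ext (fun l => f (vtrunc d (vext d e (s l))) (vext d e (s l) d) c)).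
  - intro l. apply Hval, Hs.
  - apply (cont_in_seq (S d) (fun z => f (vtrunc d z) (z d) c)).
    + intro l. apply vext_cube; auto.
    + intros c' Hc'. unfold vext. destruct (Nat.ltb_spec c' d); [apply Hcv; auto|].
      destruct (Nat.eqb_spec c' d); [apply cv_const | lia].
    + apply (Hh _ (vext_cube d e x He Hx)).
Qed.

Lemma fg_seq_cont (s : nat -> vec) x c : (c < d)%nat -> in_cube d x ->
  (forall l, in_cube d (s l)) -> (forall c, (c < d)%nat -> Un_cv (fun l => s l c) (x c)) ->
  Un_cv (fun l => f (g (s l)) e c) (f (g x) e c).
Proof.
  intros Hc Hx Hs Hcv. apply f_seq_cont; auto using adm_g_cube.
  intros c' Hc'. apply g_seq_cont; auto.
Qed.

Variables (L w : nat).
Hypothesis Hw : (1 <= w)%nat.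

Definition window_avg (prev : Z -> vec) (t : Z) : vec :=
  fun c => / INR w * rsum w (fun j => g (prev (t + Z.of_nat j)%Z) c).

Definition sc_term (prev : Z -> vec) (t : Z) : vec := f (window_avg prev t) (sc_eps L e t).

Lemma sc_step_eq prev i c : (- Z.of_nat L <= i)%Z ->
  sc_step f g e L w prev i c =
  / INR w * rsum w (fun k => sc_term prev (Z.min i (sc_i0 w) - Z.of_nat k)%Z c).
Proof.
  intros Hi. unfold sc_step. destruct (Z.ltb_spec i (- Z.of_nat L)); [lia|]. cbv zeta.
  replace (if (sc_i0 w <? i)%Z then sc_i0 w else i) with (Z.min i (sc_i0 w))
    by (destruct (Z.ltb_spec (sc_i0 w) i); lia).
  f_equal. apply rsum_ext. intros k Hk. unfold sc_term, window_avg. f_equal.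
  apply functional_extensionality; intro c'. f_equal. apply rsum_ext. intros j Hj.
  now replace (Z.min i (sc_i0 w) - Z.of_nat k + Z.of_nat j)%Z
    with (Z.min i (sc_i0 w) + Z.of_nat j - Z.of_nat k)%Z by lia.
Qed.

Section Profile.
Variable prev : Z -> vec.
Hypothesis Hprev_cube : forall z, in_cube d (prev z).

Lemma window_avg_cube t : in_cube d (window_avg prev t).
Proof.
  split; intros c Hc; unfold window_avg.
  - apply avg_bound; auto. intros j Hj. apply (adm_g_cube _ (Hprev_cube _)); auto.
  - cut (0 <= / INR w * rsum w (fun j => g (prev (t + Z.of_nat j)%Z) c) <= 0); [lra|].
    apply avg_bound; auto. intros j Hj. rewrite (proj2 (adm_g_cube _ (Hprev_cube _))); auto; lra.
Qed.

Lemma sc_term_cube t : in_cube d (sc_term prev t).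
Proof. apply adm_f_cube; [apply window_avg_cube | apply sc_eps_in_E, He]. Qed.

Lemma window_avg_le t v : (forall j, (j < w)%nat -> vle d (g (prev (t + Z.of_nat j)%Z)) v) ->
  vle d (window_avg prev t) v.
Proof.
  intros H c Hc. unfold window_avg.
  refine (proj2 (avg_bound w _ 0 (v c) Hw _)). intros j Hj.
  split; [apply (adm_g_cube _ (Hprev_cube _)); auto | apply H; auto].
Qed.

Hypothesis Hprev_mono : forall m m', (m <= m')%Z -> vle d (prev m) (prev m').

Lemma window_avg_mono t t' : (t <= t')%Z -> vle d (window_avg prev t) (window_avg prev t').
Proof.
  intros Ht c Hc. unfold window_avg.
  apply Rmult_le_compat_l; [left; apply Rinv_0_lt_compat, lt_0_INR; lia|].
  apply rsum_le. intros j Hj. apply adm_g_mono; auto. apply Hprev_mono. lia.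
Qed.

Lemma sc_term_mono t t' : (t <= t')%Z -> (sc_eps L e t' = e \/ sc_eps L e t = 0) ->
  vle d (sc_term prev t) (sc_term prev t').
Proof.
  intros Ht Heps.
  assert (Hzero : sc_eps L e t = 0 -> vle d (sc_term prev t) (sc_term prev t')).
  { intros E0. unfold sc_term at 1. rewrite E0, adm_f_param0 by apply window_avg_cube.
    apply vzero_le, sc_term_cube. }
  destruct Heps as [Et' | E0]; auto.
  destruct (sc_eps_cases L e t) as [Et | E0]; auto.
  unfold sc_term. rewrite Et, Et'. apply adm_f_mono; auto using window_avg_cube, window_avg_mono.
Qed.
End Profile.

Definition sc_state (l : nat) : Z -> vec := sc_iter d f g e L w l.

Lemma sc_state_cube l z : in_cube d (sc_state l z).
Proof.
  revert z. induction l as [|l IH]; intro z; unfold sc_state; simpl.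
  - destruct (Z.ltb_spec z (- Z.of_nat L)).
    + split; intros; unfold vzero; lra.
    + split; intros i Hi; unfold vone.
      * rewrite (proj2 (Nat.ltb_lt i d)) by auto; lra.
      * destruct (Nat.ltb_spec i d); [lia | auto].
  - fold (sc_state l). destruct (Z.ltb_spec z (- Z.of_nat L)).
    + unfold sc_step. rewrite (proj2 (Z.ltb_lt _ _)) by auto. split; intros; unfold vzero; lra.
    + split; intros c Hc; rewrite sc_step_eq by lia.
      * apply avg_bound; auto. intros k Hk. apply (sc_term_cube _ IH); auto.
      * cut (0 <= / INR w * rsum w (fun k => sc_term (sc_state l)
                                     (Z.min z (sc_i0 w) - Z.of_nat k)%Z c) <= 0); [lra|].
        apply avg_bound; auto. intros k Hk. rewrite (proj2 (sc_term_cube _ IH _)); auto; lra.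
Qed.

Lemma sc_state_copy l i c : (sc_i0 w <= i)%Z -> sc_state l i c = sc_state l (sc_i0 w) c.
Proof.
  intros Hi. destruct (sc_i0_bounds w Hw) as [H0 _]. destruct l as [|l]; unfold sc_state; simpl.
  - destruct (Z.ltb_spec i (- Z.of_nat L)); [lia|].
    destruct (Z.ltb_spec (sc_i0 w) (- Z.of_nat L)); [lia | auto].
  - rewrite !sc_step_eq by lia. now rewrite Z.min_r, Z.min_id by lia.
Qed.

(* Between positions m and m+1 < i0 the windows of terms differ by one term at
   each end, and the entering term dominates the leaving one. *)
Lemma sc_state_mono l : forall m m', (m <= m')%Z -> vle d (sc_state l m) (sc_state l m').
Proof.
  destruct (sc_i0_bounds w Hw) as [Hi0 Hi1].
  induction l as [|l IH]; apply vle_chain; intro m.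
  - unfold sc_state; simpl. destruct (Z.ltb_spec m (- Z.of_nat L)).
    + apply vzero_le. apply (sc_state_cube 0 (m + 1)).
    + destruct (Z.ltb_spec (m + 1) (- Z.of_nat L)); [lia | apply vle_refl].
  - intros c Hc. unfold sc_state; simpl. fold (sc_state l).
    destruct (Z.ltb_spec m (- Z.of_nat L)).
    + unfold sc_step at 1. rewrite (proj2 (Z.ltb_lt _ _)) by auto.
      apply (sc_state_cube (S l) (m + 1)); auto.
    + rewrite !sc_step_eq by lia.
      destruct (Z.le_gt_cases (sc_i0 w) m); [rewrite !Z.min_r by lia; lra|].
      rewrite !Z.min_l by lia.
      set (h := fun t => sc_term (sc_state l) t c).
      assert (Hshift := rsum_window_shift h m w). unfold h in Hshift.
      cut (h (m + 1 - Z.of_nat w)%Z <= h (m + 1)%Z).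
      { intros Hh. apply Rmult_le_compat_l; [left; apply Rinv_0_lt_compat, lt_0_INR; lia|].
        unfold h in Hh. lra. }
      apply sc_term_mono; auto using sc_state_cube; [lia|].
      destruct (Z.le_gt_cases (m + 1) (Z.of_nat L)).
      * left. apply sc_eps_inside. lia.
      * right. apply sc_eps_below. lia.
Qed.

(* At the centre, one coupled step stays below one single-system step:
   every window average of g is below g at position i0. *)
Lemma sc_state_center_sub l :
  vle d (sc_state (S l) (sc_i0 w)) (f (g (sc_state l (sc_i0 w))) e).
Proof.
  destruct (sc_i0_bounds w Hw) as [Hi0 _].
  assert (Hg := adm_g_cube _ (sc_state_cube l (sc_i0 w))).
  intros c Hc. unfold sc_state at 1; simpl. fold (sc_state l). rewrite sc_step_eq by lia.
  rewrite Z.min_id. refine (proj2 (avg_bound w _ 0 _ Hw _)). intros k Hk.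
  split; [apply (sc_term_cube _ (sc_state_cube l)); auto|].
  assert (HA : vle d (window_avg (sc_state l) (sc_i0 w - Z.of_nat k)%Z) (g (sc_state l (sc_i0 w)))).
  { apply window_avg_le; [apply sc_state_cube|]. intros j Hj.
    apply adm_g_mono; auto using sc_state_cube.
    destruct (Z.le_gt_cases (sc_i0 w - Z.of_nat k + Z.of_nat j) (sc_i0 w)).
    - apply sc_state_mono; auto.
    - intros c' Hc'. rewrite sc_state_copy by lia. lra. }
  unfold sc_term. destruct (sc_eps_cases L e (sc_i0 w - Z.of_nat k)%Z) as [-> | ->].
  - apply adm_f_mono; auto using window_avg_cube, sc_state_cube.
  - rewrite adm_f_param0 by (apply window_avg_cube, sc_state_cube).
    apply (adm_f_cube _ e Hg He); auto.
Qed.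

Lemma coupled_center_limit x :
  (forall c, Un_cv (fun l => sc_iter d f g e L w l (sc_i0 w) c) (x c)) ->
  in_cube d x /\ vle d x (f (g x) e).
Proof.
  intros Hcv.
  assert (Hx : in_cube d x) by (apply (in_cube_limit d (fun l => sc_state l (sc_i0 w))); auto using sc_state_cube).
  split; auto. intros c Hc.
  apply (Rle_cv_lim (Un := fun l => sc_state (S l) (sc_i0 w) c)
                    (Vn := fun l => f (g (sc_state l (sc_i0 w))) e c)).
  - intro l. apply sc_state_center_sub; auto.
  - apply (cv_succ (fun l => sc_state l (sc_i0 w) c)), Hcv.
  - apply fg_seq_cont; auto using sc_state_cube.
Qed.
End Admissible.

Theorem lemma10 (d : nat) (Dd : nat -> R) (f : vec -> R -> vec) (g : vec -> vec)
    (F : vec -> R -> R) (G : vec -> R) (e : R) (L w : nat) (X : Z -> vec) :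
  vector_admissible d Dd f g F G ->
  in_E e ->
  (1 <= w)%nat ->
  (forall i c, (- Z.of_nat L <= i <= Z.of_nat L + Z.of_nat w - 1)%Z ->
     Un_cv (fun l => sc_iter d f g e L w l i c) (X i c)) ->
  exists xinf : vec,
    (forall c, Un_cv (fun l => ss_iter f g e (X (sc_i0 w)) l c) (xinf c)) /\
    vle d (X (sc_i0 w)) xinf /\
    U_pot d Dd f g F G (X (sc_i0 w)) e >= U_pot d Dd f g F G xinf e.
Proof.
  intros Hadm He Hw Hcv.
  destruct (sc_i0_bounds w Hw) as [Hi0 Hi1].
  destruct (coupled_center_limit d Dd f g F G Hadm e He L w Hw (X (sc_i0 w)))
    as [Hx0 Hsub]; [intro c; apply Hcv; lia|].
  exact (single_system_descent d Dd f g F G Hadm e He _ Hx0 Hsub).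
Qed.
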